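(* Let $p,q\in\mathbb{C}$, $N=N_1+N_2+\dots+N_s$, and let $$\Gamma=\mathrm{Diag}\big(\Gamma^{[N_1]}_D(k_1,\dots,k_{N_1}),\ \Gamma^{[N_2]}_J(\kappa_2),\ \dots,\ \Gamma^{[N_s]}_J(\kappa_s)\big)$$ (block diagonal), where all eigenvalues $\lambda,\mu$ of $\Gamma$ satisfy $\lambda+\mu\ne0$ and $p,q\notin\{\pm\lambda\}$. Let $c=(c^{(1)},c^{(2)},\dots,c^{(s)})$ be a constant row vector of length $N$, with $c^{(1)}=(c_1,\dots,c_{N_1})$ and $c^{(j)}$ of length $N_j$. Define $$r=\begin{pmatrix} r^{[N_1]}_D(k_1,\dots,k_{N_1})\\ r^{[N_2]}_J(\kappa_2)\\ \vdots\\ r^{[N_s]}_J(\kappa_s)\end{pmatrix},\qquad M=FGH,$$ with $F=\mathrm{Diag}(F^{[N_1]}_D(k_1,\dots,k_{N_1}),F^{[N_2]}_J(\kappa_2),\dots,F^{[N_s]}_J(\kappa_s))$, $H=\mathrm{Diag}(H^{[N_1]}_D(c^{(1)}),H^{[N_2]}_J(c^{(2)}),\dots,H^{[N_s]}_J(c^{(s)}))$, and $G=(G_{i,j})_{i,j=1}^s$ the symmetric block matrix with $N_i\times N_j$ blocks $$G_{1,1}=G^{[N_1]}_D(k_1,\dots,k_{N_1}),\quad G_{1,j}=G_{j,1}^T=G^{[N_1,N_j]}_{DJ}(k_1,\dots,k_{N_1};\kappa_j)\ (1<j\le s),$$ $$G_{i,j}=G_{j,i}^T=G^{[N_i,N_j]}_{JJ}(\kappa_i;\kappa_j)\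 (1<i\le j\le s).$$ Then, for all $(n,m)\in\mathbb{Z}^2$, $$(pI-\Gamma)\tilde r=(pI+\Gamma)r,\qquad (qI-\Gamma)\hat r=(qI+\Gamma)r,\qquad M\Gamma+\Gamma M=r\,c .$$ Furthermore, for $\mathcal{A}=\mathrm{Diag}(I_{N_1},\mathcal{A}_2,\dots,\mathcal{A}_s)$ with each $\mathcal{A}_j$ an arbitrary constant $N_j\times N_j$ lower triangular Toeplitz matrix, the pair $(\mathcal{A}r,\mathcal{A}M)$ also satisfies these three equations with the same $\Gamma$ and $c$.
   Context: For $f$ on $\mathbb{Z}^2$: $\tilde f(n,m)=f(n+1,m)$, $\hat f(n,m)=f(n,m+1)$. Plane wave factor: $\rho(k)=\big(\tfrac{p+k}{p-k}\big)^n\big(\tfrac{q+k}{q-k}\big)^m\rho^0$, with the constant $\rho^0$ allowed to depend on which eigenvalue/position it is attached to but not on $k$ under differentiation; write $\rho_i=\rho(k_i)$. $\Gamma^{[N_1]}_D(k_1,\dots,k_{N_1})=\mathrm{Diag}(k_1,\dots,k_{N_1})$; $r^{[N_1]}_D=(\rho_1,\dots,\rho_{N_1})^T$; $F^{[N_1]}_D=\mathrm{Diag}(\rho_1,\dots,\rho_{N_1})$; $H^{[N_1]}_D(c_1,\dots,c_{N_1})=\mathrm{Diag}(c_1,\dots,c_{N_1})$. $\Gamma^{[N]}_J(\kappa)$: $N\times N$ with $\kappa$ on the diagonal, $1$ on the subdiagonal, $0$ elsewhere. $r^{[N]}_J(\kappa)=\big(\rho,\frac{\partial_k\rho}{1!},\dots,\frac{\partial_k^{N-1}\rho}{(N-1)!}\big)^T|_{k=\kappa}$.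 $F^{[N]}_J(\kappa)$: lower triangular with $(i,j)$ entry $\frac{1}{(i-j)!}\partial_k^{i-j}\rho|_{k=\kappa}$ for $i\ge j$. $H^{[N]}_J(d_1,\dots,d_N)$: $(i,j)$ entry $d_{i+j-1}$ if $i+j-1\le N$, else $0$. $G^{[N]}_D(k_1,\dots,k_N)$: $(i,j)$ entry $\frac1{k_i+k_j}$. $G^{[N_1,N_2]}_{DJ}(k_1,\dots,k_{N_1};b)$: $N_1\times N_2$, $(i,j)$ entry $-\big(\frac{-1}{k_i+b}\big)^j$. $G^{[N_1,N_2]}_{JJ}(a;b)$: $N_1\times N_2$, $(i,j)$ entry $\binom{i+j-2}{i-1}\frac{(-1)^{i+j}}{(a+b)^{i+j-1}}$. A lower triangular Toeplitz matrix is $(a_{i-j})$ with $a_l=0$ for $l<0$. The block sizes $N_1\ge0$, $N_j\ge1$; empty blocks are omitted. *)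

From HB Require Import structures.
From mathcomp Require Import all_boot all_order all_algebra.
Set Implicit Arguments. Unset Strict Implicit. Unset Printing Implicit Defensive.
Import Order.TTheory GRing.Theory Num.Theory.
Local Open Scope ring_scope.

Section Defs.
Variable R : numClosedFieldType.   (* the field C of the paper, generalised *)
Variables p q : R.

Definition rho (n m : int) (rho0 : R) (k : R) : R :=
  ((p + k) / (p - k)) ^ n * ((q + k) / (q - k)) ^ m * rho0.

(* The same function as a quotient of polynomials in the variable k:        *)
(* ((a+k)/(a-k))^n = num/den.                                               *)
Definition fac (a : R) (n : int) : {poly R} * {poly R} :=
  match n with
  | Posz j => ((a%:P + 'X) ^+ j, (a%:P - 'X) ^+ j)
  | Negz j => ((a%:P - 'X) ^+ j.+1, (a%:P + 'X) ^+ j.+1)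
  end.

Definition rho_frac (n m : int) (rho0 : R) : {poly R} * {poly R} :=
  ((rho0 *: ((fac p n).1 * (fac q m).1)), (fac p n).2 * (fac q m).2).

Definition qderiv (PQ : {poly R} * {poly R}) : {poly R} * {poly R} :=
  (PQ.1^`() * PQ.2 - PQ.1 * PQ.2^`(), PQ.2 ^+ 2).

Definition drho (j : nat) (n m : int) (rho0 : R) (kap : R) : R :=
  let PQ := iter j qderiv (rho_frac n m rho0) in PQ.1.[kap] / PQ.2.[kap].

Definition trho (j : nat) (n m : int) (rho0 : R) (kap : R) : R :=
  drho j n m rho0 kap / (j`!)%:R.

Definition GammaD N1 (k : 'I_N1 -> R) : 'M[R]_N1 := diag_mx (\row_i k i).

Definition GammaJ N (kap : R) : 'M[R]_N :=
  \matrix_(i, j) (if (i : nat) == j then kap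
                  else if (i : nat) == j.+1 then 1 else 0).

Definition rD N1 (n m : int) (rho0 : 'I_N1 -> R) (k : 'I_N1 -> R) : 'cV[R]_N1 :=
  \col_i rho n m (rho0 i) (k i).

Definition rJ N (n m : int) (rho0 : R) (kap : R) : 'cV[R]_N :=
  \col_(i < N) trho i n m rho0 kap.

Definition FD N1 (n m : int) (rho0 : 'I_N1 -> R) (k : 'I_N1 -> R) : 'M[R]_N1 :=
  diag_mx (\row_i rho n m (rho0 i) (k i)).

Definition FJ N (n m : int) (rho0 : R) (kap : R) : 'M[R]_N :=
  \matrix_(i, j) (if (j <= i)%N then trho (i - j) n m rho0 kap else 0).

Definition HD N1 (c : 'rV[R]_N1) : 'M[R]_N1 := diag_mx c.

Definition HJ N (d : 'rV[R]_N) : 'M[R]_N :=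
  \matrix_(i, j) (if (i + j < N)%N then d 0 (insubd i (i + j)%N) else 0).

Definition GD N1 (k : 'I_N1 -> R) : 'M[R]_N1 :=
  \matrix_(i, j) (1 / (k i + k j)).

(* 1-indexed (i,j) entry -(-1/(k_i+b))^j ; here j is 0-indexed *)
Definition GDJ N1 N2 (k : 'I_N1 -> R) (b : R) : 'M[R]_(N1, N2) :=
  \matrix_(i, j) (- ((-1) / (k i + b)) ^+ j.+1).

(* 1-indexed (i,j) entry binom(i+j-2,i-1) (-1)^(i+j) / (a+b)^(i+j-1) *)
Definition GJJ N1 N2 (a b : R) : 'M[R]_(N1, N2) :=
  \matrix_(i, j) ('C(i + j, i)%:R * (-1) ^+ (i + j) / (a + b) ^+ (i + j).+1).

Definition ltToeplitz N (A : 'M[R]_N) : Prop :=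
  exists a : nat -> R, forall i j : 'I_N,
    A i j = if (j <= i)%N then a (i - j)%N else 0.

Variables (N1 s1 : nat) (Ns : 'I_s1 -> nat).
(* blocks: first the diagonal block of size N1, then s1 (= s - 1) Jordan
   blocks of sizes Ns j *)
Variables (k : 'I_N1 -> R) (kap : 'I_s1 -> R).
Variables (rho0D : 'I_N1 -> R) (rho0J : 'I_s1 -> R).
Variables (c1 : 'rV[R]_N1) (cJ : forall j, 'rV[R]_(Ns j)).

Local Notation N := (N1 + \sum_j Ns j)%N.

Definition Gamma : 'M[R]_N :=
  block_mx (GammaD k) 0 0 (\mxdiag_j GammaJ (Ns j) (kap j)).

Definition rvec (n m : int) : 'cV[R]_N :=
  col_mx (rD n m rho0D k) (\mxcol_j rJ (Ns j) n m (rho0J j) (kap j)).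

Definition Fmat (n m : int) : 'M[R]_N :=
  block_mx (FD n m rho0D k) 0 0 (\mxdiag_j FJ (Ns j) n m (rho0J j) (kap j)).

Definition Hmat : 'M[R]_N :=
  block_mx (HD c1) 0 0 (\mxdiag_j HJ (cJ j)).

Definition Gmat : 'M[R]_N :=
  block_mx (GD k) (\mxrow_j GDJ (Ns j) k (kap j))
           (\mxrow_j GDJ (Ns j) k (kap j))^T
           (\mxblock_(i, j) (if (i <= j)%N then GJJ (Ns i) (Ns j) (kap i) (kap j)
                             else (GJJ (Ns j) (Ns i) (kap j) (kap i))^T)).

Definition Mmat (n m : int) : 'M[R]_N := Fmat n m *m Gmat *m Hmat.

Definition cvec : 'rV[R]_N := row_mx c1 (\mxrow_j cJ j).

Definition Amat (AJ : forall j, 'M[R]_(Ns j)) : 'M[R]_N :=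
  block_mx 1%:M 0 0 (\mxdiag_j AJ j).

End Defs.

From HB Require Import structures.
From mathcomp Require Import all_boot all_order all_algebra.
From mathcomp Require Import ring zify.
Set Implicit Arguments. Unset Strict Implicit. Unset Printing Implicit Defensive.
Import Order.TTheory GRing.Theory Num.Theory.
Local Open Scope ring_scope.

(* 1. Shift relations.  For a diagonal eigenvalue k the relation
      (p-k) rho(n+1) = (p+k) rho(n) is immediate.  For a Jordan block the
      entries of r_J are the Taylor coefficients t_j = rho^(j)(kappa)/j!.
      Writing rho as a quotient of polynomials P_n/Q_n in k, the polynomial
      identity (p-X) P_{n+1} Q_n = (p+X) P_n Q_{n+1} is differentiated with
      the Leibniz rule for a linear factor, which gives the Jordan-block
      relation (p-kappa) t_j(n+1) - t_{j-1}(n+1) = (p+kappa) t_j(n) + t_{j-1}(n).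
   2. Sylvester equation.  F commutes with Gamma (its Jordan blocks are lower
      triangular Toeplitz), H Gamma = Gamma^T H (its Jordan blocks are Hankel)
      and Gamma G + G Gamma^T = e e^T, where e consists of ones on the diagonal
      part and first unit vectors on the Jordan parts.  As F e = r and
      e^T H = c, this gives M Gamma + Gamma M = F (Gamma G + G Gamma^T) H = r c.
   3. Every k_i and kappa_j is an eigenvalue of Gamma, so the hypotheses on
      the spectrum make all denominators above nonzero.
   4. A = Diag(I, A_j) with A_j lower triangular Toeplitz commutes with Gamma,
      so left multiplication by A preserves the three equations. *)

(* Derivatives of rational functions, represented as pairs (P, Q) standing
   for P/Q and differentiated formally by the quotient rule [qderiv]. *)
Section RationalDerivative.
Variable R : numClosedFieldType.
Implicit Types (P Q A : {poly R}) (PQ : {poly R} * {poly R}).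

Definition ratder (j : nat) PQ (x : R) : R :=
  (iter j (@qderiv R) PQ).1.[x] / (iter j (@qderiv R) PQ).2.[x].

(* Differentiation creates no new poles: denominators are powers of Q. *)
Lemma iter_qderiv_den_neq0 j PQ x :
  PQ.2.[x] != 0 -> (iter j (@qderiv R) PQ).2.[x] != 0.
Proof. by move=> h; elim: j => // j IH /=; rewrite horner_exp expf_neq0. Qed.

(* Two representations of the same fraction have equal formal derivatives. *)
Lemma iter_qderiv_cross j P1 Q1 P2 Q2 : P1 * Q2 = P2 * Q1 ->
  (iter j (@qderiv R) (P1, Q1)).1 * (iter j (@qderiv R) (P2, Q2)).2 =
  (iter j (@qderiv R) (P2, Q2)).1 * (iter j (@qderiv R) (P1, Q1)).2.
Proof.
move=> E; elim: j => // j /=.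
case: (iter j _ (P1, Q1)) => A1 B1; case: (iter j _ (P2, Q2)) => A2 B2 /= E'.
have D := congr1 (fun x => x^`()) E'; rewrite /= !derivM in D.
apply/eqP; rewrite -subr_eq0; apply/eqP.
transitivity (B1 * B2 * ((A1^`() * B2 + A1 * B2^`()) - (A2^`() * B1 + A2 * B1^`()))
   - (B1^`() * B2 + B1 * B2^`()) * (A1 * B2 - A2 * B1)); first by ring.
by rewrite D E' !subrr ?mulr0 ?mul0r ?subrr.
Qed.

Lemma ratder_cross j P1 Q1 P2 Q2 x : P1 * Q2 = P2 * Q1 ->
  Q1.[x] != 0 -> Q2.[x] != 0 -> ratder j (P1, Q1) x = ratder j (P2, Q2) x.
Proof.
move=> E h1 h2; rewrite /ratder.
have d1 := @iter_qderiv_den_neq0 j (P1, Q1) _ h1.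
have d2 := @iter_qderiv_den_neq0 j (P2, Q2) _ h2.
by apply/eqP; rewrite eqr_div //; apply/eqP; rewrite -!hornerM iter_qderiv_cross.
Qed.

(* Leibniz rule for a factor A of degree at most one:
   (A f)^(j+1) = A f^(j+1) + (j+1) A' f^(j). *)
Lemma iter_qderiv_mul_linear j A P Q : A^`()^`() = 0 ->
  iter j.+1 (@qderiv R) (A * P, Q) =
  (A * (iter j.+1 (@qderiv R) (P, Q)).1 +
     (A^`() * (iter j (@qderiv R) (P, Q)).1 * (iter j (@qderiv R) (P, Q)).2) *+ j.+1,
   (iter j.+1 (@qderiv R) (P, Q)).2).
Proof.
move=> hA; elim: j => [|j IH]; first by rewrite /= /qderiv /= derivM; congr pair; ring.
rewrite iterS IH !iterS; case: (iter j _ (P, Q)) => P0 Q0; rewrite /qderiv /=.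
by congr pair; rewrite !(derivD, derivM, derivMn, derivB, expr2) hA; ring.
Qed.

Lemma ratder_mul_linear j A P Q x : A^`()^`() = 0 -> Q.[x] != 0 ->
  ratder j.+1 (A * P, Q) x =
  A.[x] * ratder j.+1 (P, Q) x + j.+1%:R * A^`().[x] * ratder j (P, Q) x.
Proof.
move=> hA hQ; rewrite /ratder iter_qderiv_mul_linear // [iter j.+1 _ _]/=.
move: (@iter_qderiv_den_neq0 j (P, Q) _ hQ).
case: (iter j _ (P, Q)) => P0 Q0 /= d0.
rewrite /qderiv /= !(hornerD, hornerN, hornerM, hornerMn, horner_exp).
by field; rewrite d0.
Qed.

Lemma ratder0_mul A P Q x : ratder 0 (A * P, Q) x = A.[x] * ratder 0 (P, Q) x.
Proof. by rewrite /ratder /= hornerM mulrA. Qed.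

End RationalDerivative.

Section PlaneWave.
Variable R : numClosedFieldType.
Implicit Types (PQ : {poly R} * {poly R}) (t : nat -> R).

Definition taylor PQ (x : R) (i : nat) : R := ratder i PQ x / (i`!)%:R.

(* The sequence moved down by one place, as done by the subdiagonal of a
   Jordan block. *)
Definition lower_shift t (i : nat) : R := if i is i'.+1 then t i' else 0.

(* The points x where neither p nor q meets a pole or zero of the plane wave. *)
Definition regular (p q x : R) :=
  [/\ p - x != 0, p + x != 0, q - x != 0 & q + x != 0].

Lemma regularP (p q x : R) :
  [/\ p != x, p != - x, q != x & q != - x] -> regular p q x.
Proof. by case=> *; split; rewrite ?subr_eq0 ?addr_eq0. Qed.

Lemma fac_shift (a : R) (n : int) :
  (a%:P - 'X) * (fac a (n + 1)).1 * (fac a n).2 =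
  (a%:P + 'X) * (fac a n).1 * (fac a (n + 1)).2.
Proof.
case: n => [j|[|j]].
- have -> : Posz j + 1 = Posz j.+1 by lia.
  by rewrite /= !exprS; ring.
- have -> : Negz 0 + 1 = 0 by rewrite NegzE; lia.
  by rewrite /= !expr1; ring.
- have -> : Negz j.+1 + 1 = Negz j by rewrite !NegzE; lia.
  by rewrite /= !exprS; ring.
Qed.

Lemma fac_den_neq0 (a x : R) (n : int) : a - x != 0 -> a + x != 0 ->
  (fac a n).2.[x] != 0.
Proof.
by move=> h1 h2; case: n => j /=;
  rewrite horner_exp expf_neq0 // !(hornerD, hornerN, hornerC, hornerX).
Qed.

Lemma rho_frac_den_neq0 (p q x : R) n m r0 : regular p q x ->
  (rho_frac p q n m r0).2.[x] != 0.
Proof. by case=> *; rewrite /= hornerM mulf_neq0 // fac_den_neq0. Qed.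

Lemma rho_frac_shift_n (p q : R) n m r0 :
  (p%:P - 'X) * (rho_frac p q (n + 1) m r0).1 * (rho_frac p q n m r0).2 =
  (p%:P + 'X) * (rho_frac p q n m r0).1 * (rho_frac p q (n + 1) m r0).2.
Proof.
rewrite /rho_frac /= -!mul_polyC.
transitivity (r0%:P * (fac q m).1 * (fac q m).2 *
   ((p%:P - 'X) * (fac p (n + 1)).1 * (fac p n).2)); first by ring.
by rewrite fac_shift; ring.
Qed.

Lemma rho_frac_shift_m (p q : R) n m r0 :
  (q%:P - 'X) * (rho_frac p q n (m + 1) r0).1 * (rho_frac p q n m r0).2 =
  (q%:P + 'X) * (rho_frac p q n m r0).1 * (rho_frac p q n (m + 1) r0).2.
Proof.
rewrite /rho_frac /= -!mul_polyC.
transitivity (r0%:P * (fac p n).1 * (fac p n).2 *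
   ((q%:P - 'X) * (fac q (m + 1)).1 * (fac q m).2)); first by ring.
by rewrite fac_shift; ring.
Qed.

(* Differentiating (a-X) f1 = (a+X) f0 with the Leibniz rule. *)
Lemma ratder_shift (a x : R) PQ1 PQ0 :
  (a%:P - 'X) * PQ1.1 * PQ0.2 = (a%:P + 'X) * PQ0.1 * PQ1.2 ->
  PQ1.2.[x] != 0 -> PQ0.2.[x] != 0 ->
  (forall j, (a - x) * ratder j.+1 PQ1 x - j.+1%:R * ratder j PQ1 x =
             (a + x) * ratder j.+1 PQ0 x + j.+1%:R * ratder j PQ0 x) /\
  (a - x) * ratder 0 PQ1 x = (a + x) * ratder 0 PQ0 x.
Proof.
case: PQ1 => P1 Q1; case: PQ0 => P0 Q0 /= E h1 h0.
have Ei j : ratder j ((a%:P - 'X) * P1, Q1) x = ratder j ((a%:P + 'X) * P0, Q0) x.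
  by apply: ratder_cross => //; rewrite -E; ring.
have dB : (a%:P - 'X : {poly R})^`()^`() = 0.
  by rewrite derivB derivC derivX sub0r derivN -polyC1 derivC oppr0.
have dD : (a%:P + 'X : {poly R})^`()^`() = 0.
  by rewrite derivD derivC derivX add0r -polyC1 derivC.
split=> [j|].
- have := Ei j.+1; rewrite !ratder_mul_linear //.
  rewrite !(derivB, derivD, derivN, derivC, derivX) !(hornerD, hornerN, hornerC, hornerX).
  by move=> H; apply: etrans (etrans _ H) _; ring.
- have := Ei 0; rewrite !ratder0_mul !(hornerD, hornerN, hornerC, hornerX) => H.
  by apply: etrans (etrans _ H) _; ring.
Qed.

(* The same relation for Taylor coefficients: the Jordan-block shift relation. *)
Lemma taylor_shift (a x : R) PQ1 PQ0 :
  (a%:P - 'X) * PQ1.1 * PQ0.2 = (a%:P + 'X) * PQ0.1 * PQ1.2 ->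
  PQ1.2.[x] != 0 -> PQ0.2.[x] != 0 -> forall i,
  (a - x) * taylor PQ1 x i - lower_shift (taylor PQ1 x) i =
  (a + x) * taylor PQ0 x i + lower_shift (taylor PQ0 x) i.
Proof.
move=> E h1 h0; have [ED ED0] := ratder_shift E h1 h0.
case=> [|j]; first by rewrite /taylor /= subr0 addr0 fact0 !divr1.
rewrite /taylor /= factS natrM.
have n1 : (j.+1%:R : R) != 0 by rewrite pnatr_eq0.
have n2 : ((j`!)%:R : R) != 0 by rewrite pnatr_eq0 -lt0n fact_gt0.
transitivity (((a - x) * ratder j.+1 PQ1 x - j.+1%:R * ratder j PQ1 x) /
              (j.+1%:R * (j`!)%:R)); first by field; rewrite n2 nat1r n1.
by rewrite ED; field; rewrite n2 nat1r n1.
Qed.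

Lemma rho_shift_n (p q : R) n m r0 x : regular p q x ->
  (p - x) * rho p q (n + 1) m r0 x = (p + x) * rho p q n m r0 x.
Proof.
case=> h1 h2 h3 h4; rewrite /rho.
have u : (p + x) / (p - x) != 0 by rewrite mulf_neq0 ?invr_eq0.
by rewrite expfzDr // expr1z; field.
Qed.

Lemma rho_shift_m (p q : R) n m r0 x : regular p q x ->
  (q - x) * rho p q n (m + 1) r0 x = (q + x) * rho p q n m r0 x.
Proof.
case=> h1 h2 h3 h4; rewrite /rho.
have u : (q + x) / (q - x) != 0 by rewrite mulf_neq0 ?invr_eq0.
by rewrite expfzDr // expr1z; field.
Qed.

Lemma trho_shift_n (p q : R) n m r0 x : regular p q x -> forall i,
  (p - x) * trho p q i (n + 1) m r0 x - lower_shift (fun j => trho p q j (n + 1) m r0 x) i =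
  (p + x) * trho p q i n m r0 x + lower_shift (fun j => trho p q j n m r0 x) i.
Proof.
move=> h; exact: taylor_shift (rho_frac_shift_n p q n m r0)
  (rho_frac_den_neq0 (n + 1) m r0 h) (rho_frac_den_neq0 n m r0 h).
Qed.

Lemma trho_shift_m (p q : R) n m r0 x : regular p q x -> forall i,
  (q - x) * trho p q i n (m + 1) r0 x - lower_shift (fun j => trho p q j n (m + 1) r0 x) i =
  (q + x) * trho p q i n m r0 x + lower_shift (fun j => trho p q j n m r0 x) i.
Proof.
move=> h; exact: taylor_shift (rho_frac_shift_m p q n m r0)
  (rho_frac_den_neq0 n (m + 1) r0 h) (rho_frac_den_neq0 n m r0 h).
Qed.

End PlaneWave.

Section JordanBlock.
Variable R : numClosedFieldType.

Definition zext N (x : 'I_N -> R) (c : nat) : R :=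
  if insub c is Some o then x o else 0.

Lemma zextE N (x : 'I_N -> R) (f : nat -> R) (c : nat) :
  (forall o : 'I_N, x o = f o) -> zext x c = if (c < N)%N then f c else 0.
Proof. by move=> h; rewrite /zext; case: insubP => [o -> <-|/negbTE ->]. Qed.

Lemma zext_out N (x : 'I_N -> R) c : (N <= c)%N -> zext x c = 0.
Proof. by move=> h; rewrite /zext insubF // ltnNge h. Qed.

Lemma zext_ord N (x : 'I_N -> R) (o : 'I_N) : zext x o = x o.
Proof. by rewrite /zext valK. Qed.

Lemma sum_pick N (x : 'I_N -> R) (c : nat) :
  \sum_(l < N) (if (l : nat) == c then x l else 0) = zext x c.
Proof.
rewrite /zext; case: insubP => [o _ <-|h].
  rewrite (bigD1 o) //= eqxx big1 ?addr0 // => l hl.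
  by rewrite (inj_eq val_inj) (negbTE hl).
by rewrite big1 // => l _; case: eqP => // E; move: h; rewrite -E ltn_ord.
Qed.

Definition e1 N : 'cV[R]_N := \col_i ((i : nat) == 0%N)%:R.

Lemma mulJmxE N m (kap : R) (A : 'M[R]_(N, m)) i j :
  (GammaJ N kap *m A) i j =
  kap * A i j + (if (0 < i)%N then zext (fun l => A l j) i.-1 else 0).
Proof.
rewrite !mxE.
transitivity (\sum_(l < N) ((if (l : nat) == i then kap * A l j else 0) +
   (if (l : nat) == i.-1 then (if (0 < i)%N then A l j else 0) else 0))).
  apply: eq_bigr => -[l hl] _; rewrite !mxE; case: i => i hi /=.
  case: (eqVneq i l) => [->|ne].
    by case: l hl {hi} => [|l] hl; rewrite /= ?addr0 // (_ : (l.+1 == l) = false) ?addr0 //; lia.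
  rewrite add0r; case: (eqVneq i l.+1) => [->|ne2] /=; first by rewrite eqxx mul1r.
  by rewrite mul0r; case: (eqVneq l i.-1) => // e; case: i {hi} ne ne2 e => //= i; lia.
rewrite big_split /= -!sum_pick; congr (_ + _).
  by rewrite (bigD1 i) //= eqxx big1 ?addr0 // => l hl; rewrite (inj_eq val_inj) (negbTE hl).
by case: (posnP i) => // _; rewrite big1 // => l _; case: ifP.
Qed.

Lemma mulmxJE N m (kap : R) (A : 'M[R]_(m, N)) i j :
  (A *m GammaJ N kap) i j = kap * A i j + zext (fun l => A i l) j.+1.
Proof.
rewrite !mxE.
transitivity (\sum_(l < N) ((if (l : nat) == j then kap * A i l else 0) +
   (if (l : nat) == j.+1 then A i l else 0))).
  apply: eq_bigr => l _; rewrite !mxE; case: (eqVneq (l : nat) j) => [->|ne].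
    by rewrite (_ : ((j : nat) == j.+1) = false) ?addr0 1?mulrC //; lia.
  by rewrite add0r; case: ifP; rewrite ?mulr1 ?mulr0.
rewrite big_split /= -!sum_pick; congr (_ + _).
by rewrite (bigD1 j) //= eqxx big1 ?addr0 // => l hl; rewrite (inj_eq val_inj) (negbTE hl).
Qed.

Lemma mulmxJtrE N m (kap : R) (A : 'M[R]_(m, N)) i j :
  (A *m (GammaJ N kap)^T) i j =
  kap * A i j + (if (0 < j)%N then zext (fun l => A i l) j.-1 else 0).
Proof.
have -> : A *m (GammaJ N kap)^T = (GammaJ N kap *m A^T)^T by rewrite trmx_mul trmxK.
rewrite mxE mulJmxE !mxE.
by congr (_ + _); case: ifP => // _; rewrite /zext; case: insub => // o; rewrite mxE.
Qed.

Lemma mulJtrmxE N m (kap : R) (A : 'M[R]_(N, m)) i j :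
  ((GammaJ N kap)^T *m A) i j = kap * A i j + zext (fun l => A l j) i.+1.
Proof.
have -> : (GammaJ N kap)^T *m A = (A^T *m GammaJ N kap)^T by rewrite trmx_mul trmxK.
rewrite mxE mulmxJE !mxE.
by congr (_ + _); rewrite /zext; case: insub => // o; rewrite mxE.
Qed.

Lemma ltToeplitz_GammaJC N (kap : R) (T : 'M[R]_N) : ltToeplitz T ->
  GammaJ N kap *m T = T *m GammaJ N kap.
Proof.
move=> [a ha]; apply/matrixP => i j; rewrite mulJmxE mulmxJE; congr (_ + _).
rewrite (@zextE _ _ (fun l => if (j <= l)%N then a (l - j)%N else 0)); last by move=> o; rewrite ha.
rewrite (@zextE _ _ (fun l => if (l <= i)%N then a (i - l)%N else 0)); last by move=> o; rewrite ha.
case: i j ha => [i hi] [j hj] ha /=; case: (ltnP j i) => h.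
  rewrite (_ : (0 < i)%N = true); last by lia.
  rewrite (_ : (i.-1 < N)%N = true); last by lia.
  rewrite (_ : (j <= i.-1)%N = true); last by lia.
  rewrite (_ : (j.+1 < N)%N = true); last by lia.
  by rewrite (_ : (i.-1 - j = i - j.+1)%N); last by lia.
rewrite if_same; case: ifP => // i_gt0; case: ifP => // _.
by rewrite (_ : (j <= i.-1)%N = false); last by lia.
Qed.

Lemma HJE N (d : 'rV[R]_N) (o1 o2 : 'I_N) :
  HJ d o1 o2 = zext (fun o => d 0 o) (o1 + o2).
Proof.
rewrite mxE /zext; case: insubP => [o h e|/negbTE ->] //.
by rewrite h; congr (d 0 _); apply: val_inj; rewrite val_insubd h e.
Qed.

Lemma HJ_GammaJ N (kap : R) (d : 'rV[R]_N) :
  HJ d *m GammaJ N kap = (GammaJ N kap)^T *m HJ d.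
Proof.
apply/matrixP => i j; rewrite mulmxJE mulJtrmxE; congr (_ + _).
rewrite (@zextE _ (fun l => HJ d l j) (fun l => zext (fun o => d 0 o) (l + j))); last by move=> o; rewrite HJE.
rewrite (@zextE _ (fun l => HJ d i l) (fun l => zext (fun o => d 0 o) (i + l))); last by move=> o; rewrite HJE.
case: i j => [i hi] [j hj] /=.
case: (ltnP j.+1 N) => h1; case: (ltnP i.+1 N) => h2 //.
- by rewrite addnS addSn.
- by rewrite zext_out //; lia.
- by rewrite zext_out //; lia.
Qed.

Lemma GDJ_sylvester N1 N2 (k : 'I_N1 -> R) (b : R) : (forall i, k i + b != 0) ->
  diag_mx (\row_i k i) *m GDJ N2 k b + GDJ N2 k b *m (GammaJ N2 b)^T =
  const_mx 1 *m (e1 N2)^T.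
Proof.
move=> hk; apply/matrixP => i j; rewrite mxE mulmxJtrE mul_diag_mx.
rewrite [RHS]mxE big_ord1 !mxE mul1r.
have := hk i; set s := k i + b => hs; have -> : k i = s - b by rewrite /s addrK.
case: j => [[|j] hj] /=; first by rewrite expr1; field.
rewrite (@zextE _ (fun l => GDJ N2 k b i l) (fun l => - ((-1) / s) ^+ l.+1));
  last by move=> o; rewrite mxE.
by rewrite (_ : (j < N2)%N) ?exprS; [field | lia].
Qed.

Lemma GJJ_sylvester N1 N2 (a b : R) : a + b != 0 ->
  GammaJ N1 a *m GJJ N1 N2 a b + GJJ N1 N2 a b *m (GammaJ N2 b)^T =
  e1 N1 *m (e1 N2)^T.
Proof.
move=> hs; apply/matrixP => i j; rewrite mxE mulJmxE mulmxJtrE [RHS]mxE big_ord1 !mxE.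
rewrite (@zextE _ (fun l => GJJ N1 N2 a b l j)
  (fun l => 'C(l + j, l)%:R * (-1) ^+ (l + j) / (a + b) ^+ (l + j).+1)); last by move=> o; rewrite mxE.
rewrite (@zextE _ (fun l => GJJ N1 N2 a b i l)
  (fun l => 'C(i + l, i)%:R * (-1) ^+ (i + l) / (a + b) ^+ (i + l).+1)); last by move=> o; rewrite mxE.
set s := a + b in hs *; have -> : a = s - b by rewrite /s addrK.
case: i => [[|i] hi]; case: j => [[|j] hj] /=.
- by rewrite !bin0 !expr1 !expr0; field; rewrite ?expf_neq0.
- rewrite (_ : (j < N2)%N) /=; last by lia.
  by rewrite !add0n !bin0 !exprS; field; rewrite ?expf_neq0.
- rewrite (_ : (i < N1)%N) /=; last by lia.
  by rewrite !addn0 !binn !exprS; field; rewrite ?expf_neq0.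
- rewrite (_ : (j < N2)%N = true); last by lia.
  rewrite (_ : (i < N1)%N = true); last by lia.
  rewrite (_ : (i.+1 + j.+1 = (i + j).+2)%N); last by lia.
  rewrite (_ : (i + j.+1 = (i + j).+1)%N); last by lia.
  rewrite (_ : (i.+1 + j = (i + j).+1)%N); last by lia.
  by rewrite /= binS natrD !exprS; field; rewrite ?expf_neq0.
Qed.

Lemma FJ_e1 (p q : R) N n m r0 x : FJ p q N n m r0 x *m e1 N = rJ p q N n m r0 x.
Proof.
apply/matrixP => i j; rewrite (ord1 j) !mxE.
transitivity (\sum_(l < N) (if (l : nat) == 0%N then FJ p q N n m r0 x i l else 0)).
  by apply: eq_bigr => l _; rewrite !mxE; case: (_ == 0%N); rewrite ?mulr1 ?mulr0.
rewrite sum_pick (zextE (f := fun l => if (l <= i)%N then trho p q (i - l) n m r0 x else 0));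
  last by move=> o; rewrite mxE.
by rewrite (_ : (0 < N)%N) ?subn0 //; case: i => i /=; lia.
Qed.

Lemma e1_HJ N (d : 'rV[R]_N) : (e1 N)^T *m HJ d = d.
Proof.
apply/matrixP => i j; rewrite (ord1 i) !mxE.
transitivity (\sum_(l < N) (if (l : nat) == 0%N then HJ d l j else 0)).
  by apply: eq_bigr => l _; rewrite !mxE; case: (_ == 0%N); rewrite ?mul1r ?mul0r.
rewrite sum_pick (zextE (f := fun l => zext (fun o => d 0 o) (l + j))); last by move=> o; rewrite HJE.
by rewrite (_ : (0 < N)%N) ?add0n ?zext_ord //; case: j => j /=; lia.
Qed.

Lemma e1T_GammaJ N (x : R) : (e1 N)^T *m GammaJ N x = x *: (e1 N)^T.
Proof.
apply/matrixP => a b; rewrite mulmxJE !mxE.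
rewrite (zextE (f := fun l => ((l : nat) == 0%N)%:R)); last by move=> o; rewrite !mxE.
by rewrite if_same addr0 mulrC.
Qed.

Lemma GammaD_shift N1 (a : R) (k : 'I_N1 -> R) (t1 t0 : 'I_N1 -> R) :
  (forall i, (a - k i) * t1 i = (a + k i) * t0 i) ->
  (a%:M - GammaD k) *m (\col_i t1 i) = (a%:M + GammaD k) *m (\col_i t0 i).
Proof.
move=> h; apply/matrixP => i j; rewrite (ord1 j) mulmxBl mulmxDl !mul_scalar_mx.
by rewrite /GammaD !mul_diag_mx !mxE; apply: etrans (etrans _ (h i)) _; ring.
Qed.

Lemma GammaJ_shift N (a x : R) (t1 t0 : nat -> R) :
  (forall i, (a - x) * t1 i - lower_shift t1 i = (a + x) * t0 i + lower_shift t0 i) ->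
  (a%:M - GammaJ N x) *m (\col_(i < N) t1 i) = (a%:M + GammaJ N x) *m (\col_(i < N) t0 i).
Proof.
move=> h; apply/matrixP => i j; rewrite (ord1 j) mulmxBl mulmxDl !mul_scalar_mx.
rewrite !(mulJmxE, mxE) (zextE (f := t1)) ?(zextE (f := t0)) => [|o|o]; rewrite ?mxE //.
have := h i; rewrite /lower_shift; case: i => [[|i] hi] /= e.
  by apply: etrans (etrans _ e) _; ring.
by rewrite (_ : (i < N)%N) /=; [apply: etrans (etrans _ e) _; ring | lia].
Qed.

End JordanBlock.

Section BlockDiagonal.
Variables (R : numClosedFieldType) (N1 s1 : nat) (Ns : 'I_s1 -> nat).

Lemma mxdiag_mul (B B' : forall j, 'M[R]_(Ns j)) :
  \mxdiag_j B j *m \mxdiag_j B' j = \mxdiag_j (B j *m B' j).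
Proof.
rewrite {1}/mxdiag mul_mxblock_mxdiag /mxdiag; apply: eq_mxblock => i j.
by case: eqVneq => [<-|_]; rewrite ?conform_mx_id ?mul0mx.
Qed.

Lemma blk_mul (A A' : 'M[R]_N1) (B B' : forall j, 'M[R]_(Ns j)) :
  block_mx A 0 0 (\mxdiag_j B j) *m block_mx A' 0 0 (\mxdiag_j B' j) =
  block_mx (A *m A') 0 0 (\mxdiag_j (B j *m B' j)).
Proof. by rewrite mulmx_block !mul0mx !mulmx0 !addr0 add0r mxdiag_mul. Qed.

Lemma blk_mul_col (A : 'M[R]_N1) (B : forall j, 'M[R]_(Ns j))
    (u : 'cV[R]_N1) (v : forall j, 'cV[R]_(Ns j)) :
  block_mx A 0 0 (\mxdiag_j B j) *m col_mx u (\mxcol_j v j) =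
  col_mx (A *m u) (\mxcol_j (B j *m v j)).
Proof. by rewrite mul_block_col !mul0mx addr0 add0r mul_mxdiag_mxcol. Qed.

Lemma blk_sub (a : R) (A : 'M[R]_N1) (B : forall j, 'M[R]_(Ns j)) :
  a%:M - block_mx A 0 0 (\mxdiag_j B j) =
  block_mx (a%:M - A) 0 0 (\mxdiag_j (a%:M - B j)).
Proof.
rewrite (scalar_mx_block N1) opp_block_mx add_block_mx oppr0 addr0 mxdiagB mxdiagZ.
by rewrite subrr.
Qed.

Lemma blk_add (a : R) (A : 'M[R]_N1) (B : forall j, 'M[R]_(Ns j)) :
  a%:M + block_mx A 0 0 (\mxdiag_j B j) =
  block_mx (a%:M + A) 0 0 (\mxdiag_j (a%:M + B j)).
Proof. by rewrite (scalar_mx_block N1) add_block_mx !addr0 mxdiagD mxdiagZ. Qed.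

End BlockDiagonal.

Section CommutingTransform.
Variables (R : comPzRingType) (N : nat) (Ga A : 'M[R]_N).
Hypothesis AGaC : A *m Ga = Ga *m A.

Lemma commuting_shift (a : R) (u v : 'cV[R]_N) :
  (a%:M - Ga) *m u = (a%:M + Ga) *m v ->
  (a%:M - Ga) *m (A *m u) = (a%:M + Ga) *m (A *m v).
Proof.
have AsubC : (a%:M - Ga) *m A = A *m (a%:M - Ga).
  by rewrite mulmxBl mulmxBr scalar_mxC AGaC.
have AaddC : (a%:M + Ga) *m A = A *m (a%:M + Ga).
  by rewrite mulmxDl mulmxDr scalar_mxC AGaC.
by move=> E; rewrite !mulmxA AsubC AaddC -!mulmxA E.
Qed.

Lemma commuting_sylvester (M : 'M[R]_N) (r : 'cV[R]_N) (c : 'rV[R]_N) :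
  M *m Ga + Ga *m M = r *m c ->
  (A *m M) *m Ga + Ga *m (A *m M) = (A *m r) *m c.
Proof. by move=> E; rewrite -mulmxA (mulmxA Ga) -AGaC -mulmxA -mulmxDr E mulmxA. Qed.

End CommutingTransform.

Section Assembled.
Variables (R : numClosedFieldType) (p q : R) (N1 s1 : nat) (Ns : 'I_s1 -> nat).
Variables (k : 'I_N1 -> R) (kap : 'I_s1 -> R) (rho0D : 'I_N1 -> R) (rho0J : 'I_s1 -> R).
Variables (c1 : 'rV[R]_N1) (cJ : forall j, 'rV[R]_(Ns j)).
Hypothesis HNs : forall j, (0 < Ns j)%N.

Local Notation Ga := (Gamma Ns k kap).
Local Notation r := (rvec p q Ns k kap rho0D rho0J).
Local Notation F := (Fmat p q Ns k kap rho0D rho0J).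
Local Notation H := (Hmat c1 cJ).

Lemma eigenvalue_k i : eigenvalue Ga (k i).
Proof.
apply/eigenvalueP; exists (row_mx (delta_mx 0 i) 0).
  rewrite /Gamma mul_row_block !mulmx0 !mul0mx !addr0 scale_row_mx scaler0; congr row_mx.
  apply/matrixP => a b; rewrite /GammaD mul_mx_diag !mxE (ord1 a) eqxx /=.
  by case: eqP => [<-|_]; rewrite ?mul1r ?mulr1 ?mul0r ?mulr0.
rewrite row_mx_eq0 negb_and; apply/orP; left; apply/eqP => /matrixP /(_ 0 i).
by rewrite !mxE !eqxx /=; apply/eqP; exact: oner_neq0.
Qed.

Lemma eigenvalue_kap j : eigenvalue Ga (kap j).
Proof.
pose B l : 'rV[R]_(Ns l) := if l == j then (e1 R (Ns l))^T else 0.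
apply/eigenvalueP; exists (row_mx 0 (\mxrow_l B l)).
  rewrite /Gamma mul_row_block !mulmx0 !mul0mx ?add0r ?addr0 mul_mxrow_mxdiag.
  rewrite scale_row_mx scaler0; congr row_mx.
  have -> : \mxrow_l (B l *m GammaJ (Ns l) (kap l)) = \mxrow_l (kap j *: B l).
    apply/eq_mxrow => l; rewrite /B; case: eqP => [->|_]; first exact: e1T_GammaJ.
    by rewrite mul0mx scaler0.
  by apply/matrixP => a b; rewrite !mxE.
rewrite row_mx_eq0 negb_and; apply/orP; right; apply/negP => /eqP h.
have := congr1 (fun M => submxrow M j) h; rewrite mxrowK submxrow0 /B eqxx.
by move/matrixP => /(_ 0 (Ordinal (HNs j))); rewrite !mxE /= => /eqP; rewrite oner_eq0.
Qed.

Hypothesis Hreg : forall x, eigenvalue Ga x -> regular p q x.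

Lemma rvec_shift_n n m : (p%:M - Ga) *m r (n + 1) m = (p%:M + Ga) *m r n m.
Proof.
rewrite /Gamma blk_sub blk_add /rvec !blk_mul_col; congr col_mx.
  by apply: GammaD_shift => i; apply: rho_shift_n; apply/Hreg/eigenvalue_k.
by apply/eq_mxcol => j; exact: GammaJ_shift (trho_shift_n n m (rho0J j) (Hreg (eigenvalue_kap j))).
Qed.

Lemma rvec_shift_m n m : (q%:M - Ga) *m r n (m + 1) = (q%:M + Ga) *m r n m.
Proof.
rewrite /Gamma blk_sub blk_add /rvec !blk_mul_col; congr col_mx.
  by apply: GammaD_shift => i; apply: rho_shift_m; apply/Hreg/eigenvalue_k.
by apply/eq_mxcol => j; exact: GammaJ_shift (trho_shift_m n m (rho0J j) (Hreg (eigenvalue_kap j))).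
Qed.

(* The vector e with F e = r and e^T H = c. *)
Definition evec : 'cV[R]_(N1 + \sum_j Ns j) :=
  col_mx (const_mx 1) (\mxcol_j e1 R (Ns j)).

Lemma Gamma_tr : Ga^T = block_mx (GammaD k) 0 0 (\mxdiag_j (GammaJ (Ns j) (kap j))^T).
Proof. by rewrite /Gamma tr_block_mx !trmx0 /GammaD tr_diag_mx tr_mxdiag. Qed.

Lemma Fmat_GammaC n m : Ga *m F n m = F n m *m Ga.
Proof.
rewrite /Gamma /Fmat !blk_mul; congr block_mx; first by rewrite /GammaD /FD diag_mxC.
apply/eq_mxdiag => j; apply: ltToeplitz_GammaJC.
by exists (fun l => trho p q l n m (rho0J j) (kap j)) => a b; rewrite mxE.
Qed.

Lemma Hmat_Gamma : H *m Ga = Ga^T *m H.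
Proof.
rewrite Gamma_tr /Hmat /Gamma !blk_mul; congr block_mx; first by rewrite /GammaD /HD diag_mxC.
by apply/eq_mxdiag => j; apply: HJ_GammaJ.
Qed.

Lemma Fmat_evec n m : F n m *m evec = r n m.
Proof.
rewrite /Fmat /evec blk_mul_col /rvec; congr col_mx.
  by apply/matrixP => i j; rewrite /FD mul_diag_mx !mxE mulr1.
by apply/eq_mxcol => j; apply: FJ_e1.
Qed.

Lemma evec_Hmat : evec^T *m H = cvec c1 cJ.
Proof.
rewrite /evec tr_col_mx tr_mxcol /Hmat mul_row_block !mulmx0 addr0 add0r.
rewrite mul_mxrow_mxdiag /cvec; congr row_mx.
  by apply/matrixP => i j; rewrite /HD mul_mx_diag !mxE mul1r (ord1 i).
by apply/eq_mxrow => j; apply: e1_HJ.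
Qed.

Hypothesis Hsum : forall lam mu, eigenvalue Ga lam -> eigenvalue Ga mu -> lam + mu != 0.

Lemma GDJ_row_sylvester : GammaD k *m (\mxrow_j GDJ (Ns j) k (kap j)) +
  (\mxrow_j GDJ (Ns j) k (kap j)) *m (\mxdiag_j (GammaJ (Ns j) (kap j))^T) =
  const_mx 1 *m (\mxcol_j e1 R (Ns j))^T.
Proof.
rewrite tr_mxcol mul_mxrow mul_mxrow_mxdiag mul_mxrow -mxrowD.
apply/eq_mxrow => j; apply: GDJ_sylvester => i.
by apply: Hsum; [apply: eigenvalue_k | apply: eigenvalue_kap].
Qed.

Lemma Gmat_sylvester : Ga *m Gmat Ns k kap + Gmat Ns k kap *m Ga^T = evec *m evec^T.
Proof.
rewrite Gamma_tr /Gamma /Gmat !mulmx_block !mul0mx !mulmx0 !addr0 !add0r add_block_mx.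
rewrite /evec tr_col_mx mul_col_row; congr block_mx.
- apply/matrixP => i j; rewrite mxE /GammaD mul_diag_mx mul_mx_diag !mxE big_ord1 !mxE.
  by field; apply: Hsum; apply: eigenvalue_k.
- exact: GDJ_row_sylvester.
- have := congr1 trmx GDJ_row_sylvester; rewrite raddfD /= !trmx_mul !trmxK.
  have -> : (\mxdiag_j (GammaJ (Ns j) (kap j))^T)^T = \mxdiag_j GammaJ (Ns j) (kap j).
    by rewrite tr_mxdiag; apply/eq_mxdiag => j; rewrite trmxK.
  by rewrite /GammaD tr_diag_mx addrC.
- rewrite tr_mxcol mul_mxcol_mxrow mul_mxdiag_mxblock mul_mxblock_mxdiag -mxblockD.
  have hKK i j : kap i + kap j != 0 by apply: Hsum; apply: eigenvalue_kap.
  apply/eq_mxblock => i j; case: ifP => _; first exact: GJJ_sylvester.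
  have := congr1 trmx (GJJ_sylvester (Ns j) (Ns i) (hKK j i)).
  by rewrite raddfD /= !trmx_mul !trmxK addrC.
Qed.

Lemma Mmat_sylvester n m :
  Mmat p q k kap rho0D rho0J c1 cJ n m *m Ga + Ga *m Mmat p q k kap rho0D rho0J c1 cJ n m =
  r n m *m cvec c1 cJ.
Proof.
rewrite /Mmat; set G := Gmat _ _ _.
have -> : F n m *m G *m H *m Ga = F n m *m (G *m Ga^T) *m H.
  by rewrite -[F n m *m G *m H *m Ga]mulmxA Hmat_Gamma !mulmxA.
have -> : Ga *m (F n m *m G *m H) = F n m *m (Ga *m G) *m H.
  by rewrite !mulmxA Fmat_GammaC.
by rewrite -mulmxDl -mulmxDr addrC Gmat_sylvester !mulmxA Fmat_evec -mulmxA evec_Hmat.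
Qed.

End Assembled.

Lemma Amat_GammaC (R : numClosedFieldType) N1 s1 (Ns : 'I_s1 -> nat)
    (k : 'I_N1 -> R) (kap : 'I_s1 -> R) (AJ : forall j, 'M[R]_(Ns j)) :
  (forall j, ltToeplitz (AJ j)) -> Amat N1 AJ *m Gamma Ns k kap = Gamma Ns k kap *m Amat N1 AJ.
Proof.
move=> hT; rewrite /Amat /Gamma !blk_mul mul1mx mulmx1; congr block_mx.
by apply/eq_mxdiag => j; rewrite ltToeplitz_GammaJC.
Qed.

Theorem theorem3 (R : numClosedFieldType) (p q : R)
  (N1 s1 : nat) (Ns : 'I_s1 -> nat) (HNs : forall j, (0 < Ns j)%N)
  (k : 'I_N1 -> R) (kap : 'I_s1 -> R)
  (rho0D : 'I_N1 -> R) (rho0J : 'I_s1 -> R)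
  (c1 : 'rV[R]_N1) (cJ : forall j, 'rV[R]_(Ns j))
  (Heig : forall lam mu : R,
      eigenvalue (Gamma Ns k kap) lam ->
      eigenvalue (Gamma Ns k kap) mu -> lam + mu != 0)
  (Hpq : forall lam : R, eigenvalue (Gamma Ns k kap) lam ->
      [/\ p != lam, p != - lam, q != lam & q != - lam]) :
  let Ga := Gamma Ns k kap in
  let r := rvec p q Ns k kap rho0D rho0J in
  let M := @Mmat R p q N1 s1 Ns k kap rho0D rho0J c1 cJ in
  let c := @cvec R N1 s1 Ns c1 cJ in
  (forall n m : int,
     [/\ (p%:M - Ga) *m r (n + 1) m = (p%:M + Ga) *m r n m,
         (q%:M - Ga) *m r n (m + 1) = (q%:M + Ga) *m r n m
       & M n m *m Ga + Ga *m M n m = r n m *m c]) /\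
  (forall AJ : forall j, 'M[R]_(Ns j), (forall j, ltToeplitz (AJ j)) ->
   let A := @Amat R N1 s1 Ns AJ in
   forall n m : int,
     [/\ (p%:M - Ga) *m (A *m r (n + 1) m) = (p%:M + Ga) *m (A *m r n m),
         (q%:M - Ga) *m (A *m r n (m + 1)) = (q%:M + Ga) *m (A *m r n m)
       & (A *m M n m) *m Ga + Ga *m (A *m M n m) = (A *m r n m) *m c]).
Proof.
move=> Ga r M c.
have Hreg x : eigenvalue Ga x -> regular p q x by move/Hpq/regularP.
split=> [n m | AJ hT A n m].
  by split; [exact: rvec_shift_n | exact: rvec_shift_m | exact: Mmat_sylvester].
have AGaC : A *m Ga = Ga *m A by exact: Amat_GammaC.
split; [apply: commuting_shift | apply: commuting_shift | apply: commuting_sylvester] => //.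
- exact: rvec_shift_n.
- exact: rvec_shift_m.
- exact: Mmat_sylvester.
Qed.
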